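(* Let $P=\{p_1=(121,204),\ p_2=(175,196),\ p_3=(216,82),\ p_4=(189,51),\ p_5=(44,96),\ p_6=(36,140),\ p_7=(127,135)\}$. Then $P$ is in general position and $\mu(D(P))=\binom{7}{2}-9=12$.
   Context: A set of points in the plane is in general position if no three of its points are collinear. The disjointness graph of segments $D(P)$ is the graph whose vertices are all closed straight-line segments with both endpoints in $P$, two being adjacent if and only if they are disjoint. For a graph $G$ and $U\subseteq V(G)$, two distinct vertices $x,y\in U$ are $U$-mutually visible if $G$ contains a shortest $x$-$y$ path none of whose internal vertices lies in $U$; $U$ is a mutual-visibility set if every two distinct vertices of $U$ are $U$-mutually visible. The mutual-visibility number $\mu(G)$ is the maximum size of a mutual-visibility set of $G$. *)

From HB Require Import structures.
From mathcomp Require Import all_boot all_order all_algebra.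
From mathcomp Require Import boolp.
Set Implicit Arguments. Unset Strict Implicit. Unset Printing Implicit Defensive.
Import Order.TTheory GRing.Theory Num.Theory.

Local Open Scope ring_scope.

Definition point := (rat * rat)%type.

Definition collinear (x y z : point) : Prop :=
  (y.1 - x.1) * (z.2 - x.2) - (y.2 - x.2) * (z.1 - x.1) = 0.

Definition general_position (I : finType) (p : I -> point) : Prop :=
  injective p /\
  forall i j k : I, i != j -> j != k -> i != k -> ~ collinear (p i) (p j) (p k).

Definition seg_pt (a b : point) (t : rat) : point :=
  ((1 - t) * a.1 + t * b.1, (1 - t) * a.2 + t * b.2).

Definition on_segment (a b z : point) : Prop :=
  exists t : rat, 0 <= t <= 1 /\ z = seg_pt a b t.

Definition segments_disjoint (a b c d : point) : Prop :=
  ~ exists z : point, on_segment a b z /\ on_segment c d z.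

Local Open Scope nat_scope.

Section Graph.
Variables (T : finType) (e : rel T).

(* x :: p is a walk from x to y; its length is size p *)
Definition walk (x : T) (p : seq T) (y : T) : bool :=
  path e x p && (last x p == y).

Definition shortest_path (x : T) (p : seq T) (y : T) : Prop :=
  walk x p y /\ forall q, walk x q y -> size p <= size q.

(* internal vertices of the path x :: p (all vertices but x and the last) *)
Definition internal (p : seq T) : seq T := take (size p).-1 p.

Definition mutually_visible (U : {set T}) (x y : T) : Prop :=
  exists p, shortest_path x p y /\ all (fun v => v \notin U) (internal p).

Definition mutual_visibility_set (U : {set T}) : Prop :=
  forall x y, x \in U -> y \in U -> x != y -> mutually_visible U x y.

Definition mu : nat :=
  \max_(U : {set T} | `[< mutual_visibility_set U >]) #|U|.
End Graph.

Definition coordsP : seq (int * int) :=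
  [:: (121, 204); (175, 196); (216, 82); (189, 51); (44, 96); (36, 140); (127, 135)]%Z.

Definition P (i : 'I_7) : point :=
  let c := nth (0%Z, 0%Z) coordsP i in ((c.1)%:~R, (c.2)%:~R).

(* vertices of D(P): segments p_i p_j with i < j (both endpoints in P, distinct) *)
Definition segP := {ij : 'I_7 * 'I_7 | ij.1 < ij.2}.

Definition seg_disj (s t : segP) : Prop :=
  segments_disjoint (P (val s).1) (P (val s).2) (P (val t).1) (P (val t).2).

Definition DP : rel segP := fun s t => `[< seg_disj s t >].

From mathcomp Require Import all_boot all_order all_algebra.
From mathcomp Require Import boolp ring lra zify.
Set Implicit Arguments. Unset Strict Implicit. Unset Printing Implicit Defensive.
Import Order.TTheory GRing.Theory Num.Theory.

(* Two segments on points in general position are disjoint iff one of them lies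
   strictly on one side of the line through the other; otherwise they share an
   endpoint or cross.  So D(P) is decided by orientation signs of the integer
   points.  The twelve segments [U0] form a mutual-visibility set: for each pair
   a walk avoiding [U0] internally is found whose length is the distance.
   Conversely, if x, y in U are non-adjacent with a common neighbour, every
   shortest x-y path has length two, so U misses one of their common neighbours.
   The complement of U thus hits all these "distance-two clauses", and an
   exhaustive branching search shows that such a hitting set has at least 9 of
   the 21 segments. *)

Local Open Scope ring_scope.

Definition orient {R : pzRingType} (a b c : R * R) : R :=
  (b.1 - a.1) * (c.2 - a.2) - (b.2 - a.2) * (c.1 - a.1).

Lemma orient_rmorph (R S : pzRingType) (f : {rmorphism R -> S}) (a b c : R * R) :
  orient (f a.1, f a.2) (f b.1, f b.2) (f c.1, f c.2) = f (orient a b c).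
Proof. by rewrite /orient /= !(rmorphB, rmorphM). Qed.

Lemma ratio_in01 (R : realFieldType) (x y : R) : x * y < 0 -> 0 <= x / (x - y) <= 1.
Proof.
case: (ltrgt0P x) => [x0 | x0 | ->] xy; last by move: xy; rewrite mul0r ltxx.
- have d0 : 0 < x - y by nra.
  by rewrite divr_ge0 ?ler_pdivrMr ?mul1r //=; nra.
- have d0 : x - y < 0 by nra.
  by rewrite ler_ndivlMr // ler_ndivrMr // mul0r mul1r; apply/andP; split; nra.
Qed.

Lemma convex_comb_gt0 (R : realDomainType) (x y u : R) :
  0 < x -> 0 < y -> 0 <= u -> u <= 1 -> 0 < (1 - u) * x + u * y.
Proof.
move=> x0 y0 u0 u1.
have [-> | u_neq0] := eqVneq u 0; first by rewrite subr0 mul1r mul0r addr0.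
have : 0 < u * y by rewrite mulr_gt0 // lt0r u_neq0.
have : 0 <= (1 - u) * x by rewrite mulr_ge0 ?subr_ge0 // ltW.
lra.
Qed.

Section Segments.
Implicit Types (a b c d : point) (t : rat).

Lemma orient_seg_pt a b c d t :
  orient a b (seg_pt c d t) = (1 - t) * orient a b c + t * orient a b d.
Proof. rewrite /orient /seg_pt /=; ring. Qed.

Lemma orient_seg_pt_on a b t : orient a b (seg_pt a b t) = 0.
Proof. rewrite /orient /seg_pt /=; ring. Qed.

Lemma segments_disjointC a b c d :
  segments_disjoint a b c d -> segments_disjoint c d a b.
Proof. by move=> abcd [z [zcd zab]]; apply: abcd; exists z. Qed.

Lemma same_side_disjoint a b c d :
  0 < orient a b c * orient a b d -> segments_disjoint a b c d.
Proof.
move=> cd [z [[t [_ ->]] [u [/andP [u0 u1] zu]]]].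
move: (orient_seg_pt_on a b t); rewrite zu orient_seg_pt.
move: cd; set oc := orient a b c; set od := orient a b d => cd on_ab.
have : 0 < ((1 - u) * oc + u * od) * oc.
  by rewrite mulrDl -!mulrA [od * oc]mulrC; apply: convex_comb_gt0 => //; nra.
by rewrite on_ab mul0r ltxx.
Qed.

Lemma crossing_not_disjoint a b c d :
  orient a b c * orient a b d < 0 -> orient c d a * orient c d b < 0 ->
  ~ segments_disjoint a b c d.
Proof.
set oc := orient a b c; set od := orient a b d.
set oa := orient c d a; set ob := orient c d b.
move=> cd ab; apply.
have ab0 : oa - ob != 0 by apply/eqP => e; move: ab; nra.
have cd0 : oc - od != 0 by apply/eqP => e; move: cd; nra.
exists (seg_pt c d (oc / (oc - od))); split.
  exists (oa / (oa - ob)); split; first exact: ratio_in01.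
  move: ab0 cd0; rewrite /oa /ob /oc /od /orient /seg_pt.
  case: a b c d {oa ob oc od ab cd} => [a1 a2] [b1 b2] [c1 c2] [d1 d2] /= ab0 cd0.
  by congr (_, _); field; rewrite ab0 cd0.
by exists (oc / (oc - od)); split; first exact: ratio_in01.
Qed.

Lemma common_endpoint_not_disjoint a b c d :
  [|| a == c, a == d, b == c | b == d] -> ~ segments_disjoint a b c d.
Proof.
have seg_pt0 x y : seg_pt x y 0 = x.
  by case: x y => [? ?] [? ?]; rewrite /seg_pt /=; congr (_, _); ring.
have seg_pt1 x y : seg_pt x y 1 = y.
  by case: x y => [? ?] [? ?]; rewrite /seg_pt /=; congr (_, _); ring.
have h0 : 0 <= (0 : rat) <= 1 by rewrite lexx ler01.
have h1 : 0 <= (1 : rat) <= 1 by rewrite lexx ler01.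
case/or4P => /eqP e; apply.
- by exists a; split; [exists 0 | exists 0]; rewrite seg_pt0 ?e.
- by exists a; split; [exists 0; rewrite seg_pt0 | exists 1; rewrite seg_pt1 e].
- by exists b; split; [exists 1; rewrite seg_pt1 | exists 0; rewrite seg_pt0 e].
- by exists b; split; [exists 1 | exists 1]; rewrite seg_pt1 ?e.
Qed.

End Segments.

(* Signs rather than products: [int] is unary, and products of integer
   orientations are too large for [vm_compute]. *)
Definition separated {R : realDomainType} (a b c d : R * R) : bool :=
  (sgz (orient a b c) * sgz (orient a b d) == 1) ||
  (sgz (orient c d a) * sgz (orient c d b) == 1).

Lemma separated_disjoint (a b c d : point) :
  separated a b c d -> segments_disjoint a b c d.
Proof.
rewrite /separated -!sgzM !sgz_cp0.
by case/orP => /same_side_disjoint // /segments_disjointC.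
Qed.

Lemma disjoint_separated (a b c d : point) :
  orient a b c * orient a b d != 0 -> orient c d a * orient c d b != 0 ->
  segments_disjoint a b c d -> separated a b c d.
Proof.
rewrite /separated -!sgzM !sgz_cp0 => cd0 ab0 abcd.
apply/negPn/negP; rewrite negb_or -!leNgt !le_eqVlt (negPf cd0) (negPf ab0) /=.
by case/andP => cd ab; apply: (crossing_not_disjoint cd ab).
Qed.

Local Close Scope ring_scope.

Section HittingSets.
Variable T : finType.
Implicit Types (W : seq T) (cls : seq (seq T)) (X : {set T}).

Fixpoint hit_search (k : nat) W cls : bool :=
  let i := find (fun c => ~~ has [in W] c) cls in
  (i < size cls) &&
  if k is k'.+1 then all (fun v => hit_search k' (v :: W) cls) (nth [::] cls i) else true.

Lemma hit_searchP k W cls X :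
  hit_search k W cls -> uniq W -> {subset W <= X} ->
  {in cls, forall c, has [in X] c} -> k + size W < #|X|.
Proof.
elim: k W => [|k IHk] W /=; set i := find _ cls;
  move=> /andP [missed search] uW WX hitX;
  have /hitX /hasP [v vc vX] : nth [::] cls i \in cls by exact: mem_nth.
all: have cW := nth_find [::] (etrans (has_find _ _) missed).
all: have vW : v \notin W by apply: contra cW => vW; apply/hasP; exists v.
all: have vWX : {subset v :: W <= X} by move=> u /[1!inE] /orP [/eqP -> | /WX].
all: have uvW : uniq (v :: W) by rewrite /= vW uW.
- rewrite cardE; apply: (uniq_leq_size uvW) => u /vWX; by rewrite mem_enum.
- by rewrite addSn -addnS; exact: IHk (v :: W) (allP search v vc) uvW vWX hitX.
Qed.
End HittingSets.

Section MutualVisibilityNumber.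
Variables (T : finType) (e : rel T).

Lemma mv_set_card_le_mu (U : {set T}) : mutual_visibility_set e U -> #|U| <= mu e.
Proof. by move=> mvU; apply: leq_bigmax_cond; apply/asboolP. Qed.

Lemma mu_le m : (forall U, mutual_visibility_set e U -> #|U| <= m) -> mu e <= m.
Proof. by move=> mv_le; apply/bigmax_leqP => U /asboolP; apply: mv_le. Qed.

Lemma internal_cons (x y : T) p : internal [:: x, y & p] = x :: internal (y :: p).
Proof. by []. Qed.

Lemma mutual_visibility_dist2 (U : {set T}) x y z :
  mutual_visibility_set e U -> x \in U -> y \in U -> x != y -> ~~ e x y ->
  e x z -> e z y -> exists2 w, w \notin U & e x w && e w y.
Proof.
move=> mvU xU yU xy nexy exz ezy.
have [p [[xpy p_min] p_avoids]] := mvU x y xU yU xy.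
have : size p <= 2 by apply: (p_min [:: z; y]); rewrite /walk /= exz ezy eqxx.
move: xpy p_avoids; rewrite /walk.
case: p {p_min} => [|w [|v [|? ?]]] //=.
- by move=> /eqP xy_eq; rewrite xy_eq eqxx in xy.
- by rewrite andbT => /andP [exw /eqP wy]; rewrite -wy exw in nexy.
- by rewrite !andbT => /andP [/andP [exw ewv] /eqP <-] wU; exists w; rewrite ?exw.
Qed.

End MutualVisibilityNumber.

Section AdjacencyLists.
Variables (T : finType) (e : rel T) (nbrs : T -> seq T).
Hypothesis nbrsP : forall x y, e x y = (y \in nbrs x).

Fixpoint reach (A : pred T) (n : nat) (x y : T) : bool :=
  (x == y) ||
  if n is m.+1 then has (fun w => (w == y) || ~~ A w && reach A m w y) (nbrs x) else false.

Lemma reachP A n x y :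
  reflect (exists p, [/\ walk e x p y, size p <= n & all (predC A) (internal p)])
          (reach A n x y).
Proof.
elim: n x => [|n IHn] x /=.
  rewrite orbF; apply: (iffP eqP) => [<- | [[|? ?] [/andP [_ /eqP] //]]].
  by exists [::]; rewrite /walk /= eqxx.
have [<- | xy] /= := eqVneq x y.
  by apply: ReflectT; exists [::]; rewrite /walk /= eqxx.
apply: (iffP hasP) => [[w xw /orP [/eqP <- | /andP [wA /IHn [p [wpy p_n p_int]]]]] | ].
- by exists [:: w]; rewrite /walk /= nbrsP xw eqxx.
- exists (w :: p); split => //.
  + by rewrite /walk /= nbrsP xw.
  + by case: p wpy {p_n} p_int => [// | v p _ p_int]; rewrite internal_cons /= wA.
case=> [[|w p] [/andP [/= xwp /eqP lastp] p_n p_int]]; first by rewrite -lastp eqxx in xy.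
move: xwp => /andP [exw wp]; exists w; first by rewrite -nbrsP.
case: p wp lastp p_n p_int => [_ /= -> | v p wp lastp p_n]; first by rewrite eqxx.
rewrite internal_cons /= => /andP [wA p_int]; rewrite wA /=.
by apply/orP; right; apply/IHn; exists (v :: p); split; rewrite // /walk wp lastp eqxx.
Qed.

Lemma reach_shortest_path A k x y :
  reach A k x y -> ~~ reach xpred0 k.-1 x y ->
  exists p, shortest_path e x p y /\ all (predC A) (internal p).
Proof.
move=> /reachP [p [xpy p_k p_int]] far; exists p; split => //; split => // q xqy.
rewrite (leq_trans p_k) // leqNgt; apply: contra far => q_k.
apply/reachP; exists q; split => //; first by rewrite -ltnS (ltn_predK q_k).
by apply/allP.
Qed.

Definition mv_cert (n : nat) (U : seq T) : bool :=
  all (fun x => all (fun y => (x != y) ==>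
    has (fun k => reach [pred v | v \in U] k x y && ~~ reach xpred0 k.-1 x y) (iota 0 n))
  U) U.

Lemma mv_certP n U : mv_cert n U -> mutual_visibility_set e [set x in U].
Proof.
move=> cert x y; rewrite !inE => xU yU xy.
have /hasP [k _ /andP [near far]] := implyP (allP (allP cert x xU) y yU) xy.
have [p [p_min p_int]] := reach_shortest_path near far.
by exists p; split => //; apply: sub_all p_int => v; rewrite inE.
Qed.

Lemma mv_cert_size_le_mu n U : uniq U -> mv_cert n U -> size U <= mu e.
Proof.
by move=> uU /mv_certP /mv_set_card_le_mu; rewrite cardsE (card_uniqP uU).
Qed.

Definition common_nbrs (x y : T) : seq T := [seq z <- nbrs x | y \in nbrs z].

(* Shortest clauses first, which keeps the branching of [hit_search] small. *)
Definition dist2_clauses (xs : seq T) : seq (seq T) :=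
  sort (fun c d => size c <= size d)
    [seq x :: y :: common_nbrs x y | x <- xs,
       y <- [seq y <- xs | [&& x != y, y \notin nbrs x & common_nbrs x y != [::]]]].

Lemma mv_set_hits_dist2_clauses (U : {set T}) xs c :
  mutual_visibility_set e U -> c \in dist2_clauses xs -> has [in ~: U] c.
Proof.
rewrite mem_sort => mvU.
case/allpairsPdep => x [y [_ /[!mem_filter] /andP [/and3P [xy nexy nz] _] ->]].
have [z] : exists z, z \in common_nbrs x y.
  by case: (common_nbrs x y) nz => [|z ?] //; exists z; rewrite inE eqxx.
rewrite mem_filter -!nbrsP => /andP [ezy exz].
rewrite /= !inE; case: (boolP (x \in U)) => //= xU; case: (boolP (y \in U)) => //= yU.
rewrite -nbrsP in nexy.
have [w wU /andP [exw ewy]] := mutual_visibility_dist2 mvU xU yU xy nexy exz ezy.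
by apply/hasP; exists w; rewrite ?inE // mem_filter -!nbrsP exw ewy.
Qed.

Lemma mv_set_card_lt k xs (U : {set T}) :
  hit_search k [::] (dist2_clauses xs) -> mutual_visibility_set e U -> #|U| + k < #|T|.
Proof.
move=> search mvU; rewrite -(cardsC U) ltn_add2l -[k]addn0.
by apply: hit_searchP search _ _ _ => // c; apply: mv_set_hits_dist2_clauses.
Qed.

End AdjacencyLists.

(* [vm_compute] evaluates [tab] once, when [memo xs f r0] is passed as an argument. *)
Definition memo {T : eqType} {R : Type} (xs : seq T) (f : T -> R) (r0 : R) : T -> R :=
  let tab := map f xs in fun x => nth r0 tab (index x xs).

Lemma memoE (T : eqType) (R : Type) (xs : seq T) (f : T -> R) r0 x :
  x \in xs -> memo xs f r0 x = f x.
Proof. by move=> xs_x; rewrite /memo (nth_map x) ?index_mem ?nth_index. Qed.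

(* [enum] and [insub] get stuck in [vm_compute] on opaque proofs, unlike [insub_eq]. *)
Definition ords : seq 'I_7 := pmap (insub_eq _) (iota 0 7).
Definition segs : seq segP := pmap (insub_eq _) [seq (i, j) | i <- ords, j <- ords].

Lemma mem_ords i : i \in ords.
Proof. by rewrite /ords (eq_pmap (@insub_eqE _ _ _)) mem_pmap_sub mem_iota ltn_ord. Qed.

Lemma mem_segs s : s \in segs.
Proof.
case: s => [[i j] ij]; rewrite /segs (eq_pmap (@insub_eqE _ _ _)) mem_pmap_sub.
by apply/allpairsP; exists (i, j); rewrite !mem_ords.
Qed.

Lemma uniq_segs : uniq segs. Proof. by vm_compute. Qed.

Lemma card_segP : #|{: segP}| = 21.
Proof.
have enum_segs : perm_eq (enum {: segP}) segs.
  by apply: uniq_perm (enum_uniq _) uniq_segs _ => s; rewrite mem_enum mem_segs.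
by rewrite cardE (perm_size enum_segs); vm_compute.
Qed.

Definition coord (i : 'I_7) : int * int := nth (0, 0)%Z coordsP i.

Lemma orient_P i j k :
  orient (P i) (P j) (P k) = ((orient (coord i) (coord j) (coord k))%:~R)%R.
Proof. exact: (orient_rmorph intr). Qed.

Lemma general_position_P : general_position P.
Proof.
split=> [i j /pair_equal_spec [/intr_inj eq1 /intr_inj eq2] | i j k ij jk ik].
  have : coord i = coord j by rewrite [coord i]surjective_pairing eq1 eq2 -surjective_pairing.
  by move/eqP; rewrite nth_uniq ?ltn_ord // => /eqP /val_inj.
have gp : all (fun i => all (fun j => all (fun k =>
    [|| i == j, j == k, i == k | orient (coord i) (coord j) (coord k) != 0%R])
  ords) ords) ords.
  by vm_compute.
move: (allP (allP (allP gp i (mem_ords i)) j (mem_ords j)) k (mem_ords k)).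
rewrite (negPf ij) (negPf jk) (negPf ik) /= => nz.
by rewrite /collinear -/(orient _ _ _) orient_P => /eqP; rewrite intr_eq0; apply/negP.
Qed.

Lemma orient_P_neq0 i j k : i != j -> j != k -> i != k -> orient (P i) (P j) (P k) != 0%R.
Proof. by move=> ij jk ik; apply/eqP; apply: general_position_P.2. Qed.

Lemma separated_P i j k l :
  separated (P i) (P j) (P k) (P l) = separated (coord i) (coord j) (coord k) (coord l).
Proof. by rewrite /separated !orient_P !sgz_int. Qed.

Definition seg_separated (s t : segP) : bool :=
  separated (coord (val s).1) (coord (val s).2) (coord (val t).1) (coord (val t).2).

Lemma DPE s t : DP s t = seg_separated s t.
Proof.
case: s t => [[i j] ij] [[k l] kl]; rewrite /DP /seg_disj /seg_separated /= -separated_P.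
apply/asboolP/idP => [disj | /separated_disjoint //].
have [shared | ] := boolP [|| i == k, i == l, j == k | j == l].
  case: (common_endpoint_not_disjoint _ disj).
  by case/or4P: shared => /eqP ->; rewrite eqxx ?orbT.
rewrite !negb_or => /and4P [ik il jk jl].
have ji : j != i by apply: contraTneq ij => ->; rewrite ltnn.
have lk : l != k by apply: contraTneq kl => ->; rewrite ltnn.
apply: disjoint_separated disj; rewrite mulf_neq0 ?orient_P_neq0 // 1?eq_sym //.
Qed.

Definition DP_nbrs : segP -> seq segP :=
  memo segs (fun s => [seq t <- segs | seg_separated s t]) [::].

Lemma DP_nbrsP s t : DP s t = (t \in DP_nbrs s).
Proof. by rewrite /DP_nbrs memoE ?mem_segs // mem_filter mem_segs andbT DPE. Qed.

(* In the paper's numbering: the ten segments spanned by p3, ..., p7, and p1p5, p2p3. *)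
Definition U0 : seq segP :=
  [seq s : segP <- segs | (2 <= (val s).1) ||
     ((nat_of_ord (val s).1, nat_of_ord (val s).2) \in [:: (0, 4); (1, 2)])].

Lemma mv_cert_U0 : mv_cert DP_nbrs 3 U0.
Proof. by vm_compute. Qed.

Lemma hit_search_DP : hit_search 8 [::] (dist2_clauses DP_nbrs segs).
Proof. by vm_compute. Qed.

Lemma mu_DP : mu DP = 12.
Proof.
apply/eqP; rewrite eqn_leq; apply/andP; split.
  apply: mu_le => U mvU.
  have : #|U| + 8 < #|{: segP}| by exact: (mv_set_card_lt DP_nbrsP hit_search_DP mvU).
  by rewrite card_segP; lia.
have size_U0 : size U0 = 12 by vm_compute.
rewrite -size_U0; apply: (mv_cert_size_le_mu DP_nbrsP _ mv_cert_U0).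
exact: filter_uniq uniq_segs.
Qed.

Theorem proposition3 :
  general_position P /\ mu DP = 'C(7, 2) - 9 /\ mu DP = 12.
Proof. by rewrite mu_DP; split; first exact: general_position_P. Qed.
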